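(* Let $\lambda_1\neq\lambda_2$ be real numbers, $J_2=\mathrm{diag}(\lambda_1,\lambda_1,\lambda_2)$ and $h>0$. Let $\theta\in\mathbb{R}$ and define $$\phi=\frac{e^{\lambda_1h}-e^{\lambda_2h}}{(\lambda_1-\lambda_2)(1-\theta)+\theta(\lambda_1e^{\lambda_1h}-\lambda_2e^{\lambda_2h})},\qquad \psi=e^{\lambda_1h}(1-\phi\lambda_1\theta)-\phi\lambda_1(1-\theta).$$ Then (whenever these expressions are defined and $1-\phi\lambda_1\theta\neq0$, $1-\phi\lambda_2\theta\neq 0$) the difference scheme $$\frac{\mathbf{x}_{k+1}-\psi\mathbf{x}_k}{\phi}=J_2\big[\theta\mathbf{x}_{k+1}+(1-\theta)\mathbf{x}_k\big]$$ is exact for the system $\mathbf{x}'=J_2\mathbf{x}$.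
   Context: A one-step difference scheme with step size $h>0$ for $\mathbf{x}'=M\mathbf{x}$ is called exact if for every initial vector $\mathbf{x}_0$ the sequence $(\mathbf{x}_k)$ it generates satisfies $\mathbf{x}_k=\mathbf{x}(kh)$ for all $k\ge 0$, where $\mathbf{x}(t)$ solves $\mathbf{x}'=M\mathbf{x}$, $\mathbf{x}(0)=\mathbf{x}_0$. *)

From HB Require Import structures.
From mathcomp Require Import all_boot all_order all_algebra.
From mathcomp Require Import all_classical all_reals all_analysis.
Set Implicit Arguments. Unset Strict Implicit. Unset Printing Implicit Defensive.
Import Order.TTheory GRing.Theory Num.Theory.
Import numFieldNormedType.Exports.
Local Open Scope ring_scope.

Definition ode_solution (R : realType) (n : nat) (M : 'M[R]_n) (x0 : 'cV[R]_n)
  (x : R -> 'cV[R]_n) : Prop :=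
  x 0 = x0 /\ forall t : R, derivable x t 1 /\ 'D_1 x t = M *m x t.

(* A one-step scheme is given by the relation S x_k x_{k+1} it imposes. *)
Definition exact_scheme (R : realType) (n : nat) (M : 'M[R]_n) (h : R)
  (S : 'cV[R]_n -> 'cV[R]_n -> Prop) : Prop :=
  forall (x0 : 'cV[R]_n) (xs : nat -> 'cV[R]_n),
    xs 0%N = x0 -> (forall k, S (xs k) (xs k.+1)) ->
    forall x : R -> 'cV[R]_n, ode_solution M x0 x ->
    forall k : nat, xs k = x (k%:R * h).

Definition J2 (R : realType) (l1 l2 : R) : 'M[R]_3 :=
  diag_mx (\row_(i < 3) if i == 2 :> nat then l2 else l1).

Definition phi6 (R : realType) (l1 l2 h th : R) : R :=
  (expR (l1 * h) - expR (l2 * h)) /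
  ((l1 - l2) * (1 - th) + th * (l1 * expR (l1 * h) - l2 * expR (l2 * h))).

Definition psi6 (R : realType) (l1 l2 h th : R) : R :=
  expR (l1 * h) * (1 - phi6 l1 l2 h th * l1 * th) - phi6 l1 l2 h th * l1 * (1 - th).

Definition theta_scheme (R : realType) (n : nat) (M : 'M[R]_n) (phi psi th : R)
  (xk xk1 : 'cV[R]_n) : Prop :=
  phi^-1 *: (xk1 - psi *: xk) = M *m (th *: xk1 + (1 - th) *: xk).

From HB Require Import structures.
From mathcomp Require Import all_boot all_order all_algebra.
From mathcomp Require Import all_classical all_reals all_analysis.
From mathcomp Require Import ring.
Set Implicit Arguments. Unset Strict Implicit.
Import Order.TTheory GRing.Theory Num.Theory.
Import numFieldNormedType.Exports.
Local Open Scope ring_scope.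

(** [J2] is diagonal, so both the flow and the scheme decouple into scalar
  problems, one per eigenvalue [l].  The exact flow multiplies the [l]-component
  by [expR (l * h)] per step, and the scalar theta scheme multiplies it by
  [(psi + phi l (1 - th)) / (1 - phi l th)]; the scheme is exact iff these two
  factors agree for every eigenvalue.  For [l1] this is the definition of [psi];
  for [l2] it reduces, after eliminating [psi], to
  [phi * ((l1 - l2)(1 - th) + th (l1 e1 - l2 e2)) = e1 - e2], which is the
  definition of [phi]. *)

Lemma expR_scalar_ode (R : realType) (l : R) (y : R -> R) :
  (forall t : R, is_derive t (1 : R) y (l * y t)) -> forall t, y t = expR (l * t) * y 0.
Proof.
move=> dy t.
pose g (s : R) := expR (- l * s) * y s.
have dg (s : R) : is_derive s (1 : R) g 0.
  have dlin : is_derive s 1 (fun s : R => - l * s) (- l).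
    by rewrite -[X in is_derive _ _ _ X]mulr1; exact: is_deriveZ.
  have dexp : is_derive s 1 (expR \o (fun s : R => - l * s)) (expR (- l * s) * - l).
    exact: is_derive1_comp.
  have -> : g = (expR \o (fun s : R => - l * s)) * y by apply/funext.
  by apply: (is_derive_eq (is_deriveM dexp (dy s))); rewrite /GRing.scale /=; ring.
have := is_derive_0_is_cst 0 t dg.
rewrite /g mulr0 expR0 mul1r => ->.
by rewrite mulrA -expRD mulNr addrN expR0 mul1r.
Qed.

Lemma diag_ode_solutionE (R : realType) (n : nat) (d : 'rV[R]_n) (x0 : 'cV[R]_n)
    (x : R -> 'cV[R]_n) :
  ode_solution (diag_mx d) x0 x -> forall t i, x t i 0 = expR (d 0 i * t) * x0 i 0.
Proof.
move=> [<- dx] t i; apply: (@expR_scalar_ode R (d 0 i) (fun t => x t i 0)) => s.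
have [xs_derivable Dx] := dx s.
have xi_derivable : derivable (fun t => x t i 0) s 1.
  by move/derivable_mxP: xs_derivable; apply.
apply: DeriveDef => //.
have := congr1 (fun v : 'cV[R]_n => v i 0) Dx.
by rewrite /= (derive_mx xs_derivable) mxE mul_diag_mx mxE.
Qed.

Lemma theta_step_scalar (R : fieldType) (l phi psi th e a b : R) :
  phi != 0 -> 1 - phi * l * th != 0 ->
  psi + phi * l * (1 - th) = e * (1 - phi * l * th) ->
  phi^-1 * (a - psi * b) = l * (th * a + (1 - th) * b) -> a = e * b.
Proof.
move=> phi_neq0 den_neq0 factor_e step.
have {}step : a - psi * b = phi * (l * (th * a + (1 - th) * b)).
  by rewrite -step mulrA divff // mul1r.
apply: (mulIf den_neq0).
rewrite [e * b * _]mulrAC -factor_e; apply: subr0_eq.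
by transitivity (a - psi * b - phi * (l * (th * a + (1 - th) * b)));
  [ring | rewrite step subrr].
Qed.

Lemma theta_scheme_diag_iterate (R : realType) (n : nat) (d : 'rV[R]_n)
    (phi psi th : R) (e : 'I_n -> R) (xs : nat -> 'cV[R]_n) :
  phi != 0 -> (forall i, 1 - phi * d 0 i * th != 0) ->
  (forall i, psi + phi * d 0 i * (1 - th) = e i * (1 - phi * d 0 i * th)) ->
  (forall k, theta_scheme (diag_mx d) phi psi th (xs k) (xs k.+1)) ->
  forall k i, xs k i 0 = e i ^+ k * xs 0%N i 0.
Proof.
move=> phi_neq0 den_neq0 factor_e step k i.
elim: k => [|k IHk]; first by rewrite expr0 mul1r.
rewrite exprS -mulrA -IHk.
apply: (theta_step_scalar phi_neq0 (den_neq0 i) (factor_e i)).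
have := congr1 (fun v : 'cV[R]_n => v i 0) (step k).
by rewrite /= mul_diag_mx !mxE.
Qed.

Lemma theta_scheme_diag_exact (R : realType) (n : nat) (d : 'rV[R]_n)
    (h phi psi th : R) :
  phi != 0 -> (forall i, 1 - phi * d 0 i * th != 0) ->
  (forall i, psi + phi * d 0 i * (1 - th) = expR (d 0 i * h) * (1 - phi * d 0 i * th)) ->
  exact_scheme (diag_mx d) h (theta_scheme (diag_mx d) phi psi th).
Proof.
move=> phi_neq0 den_neq0 factor_e x0 xs <- step x x_sol k.
apply/matrixP => i j; rewrite ord1.
rewrite (theta_scheme_diag_iterate phi_neq0 den_neq0 factor_e step).
by rewrite (diag_ode_solutionE x_sol) -expRM_natl mulrCA.
Qed.

Lemma theta_factor_second_eigenvalue (R : comPzRingType) (l1 l2 e1 e2 phi th : R) :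
  phi * ((l1 - l2) * (1 - th) + th * (l1 * e1 - l2 * e2)) = e1 - e2 ->
  e1 * (1 - phi * l1 * th) - phi * l1 * (1 - th) + phi * l2 * (1 - th)
    = e2 * (1 - phi * l2 * th).
Proof.
move=> phiD; apply: subr0_eq.
transitivity (e1 - e2 - phi * ((l1 - l2) * (1 - th) + th * (l1 * e1 - l2 * e2))).
  by ring.
by rewrite phiD subrr.
Qed.

Theorem theorem6 (R : realType) (l1 l2 h th : R) :
  l1 != l2 -> 0 < h ->
  (l1 - l2) * (1 - th) + th * (l1 * expR (l1 * h) - l2 * expR (l2 * h)) != 0 ->
  1 - phi6 l1 l2 h th * l1 * th != 0 ->
  1 - phi6 l1 l2 h th * l2 * th != 0 ->
  exact_scheme (J2 l1 l2) h
    (theta_scheme (J2 l1 l2) (phi6 l1 l2 h th) (psi6 l1 l2 h th) th).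
Proof.
move=> l12 h_gt0 D_neq0 den1_neq0 den2_neq0.
set phi := phi6 l1 l2 h th.
have phi_neq0 : phi != 0.
  rewrite /phi /phi6 mulf_eq0 invr_eq0 (negbTE D_neq0) orbF subr_eq0.
  apply/negP => /eqP /expR_inj /(mulIf (lt0r_neq0 h_gt0)) /eqP.
  by rewrite (negbTE l12).
apply: theta_scheme_diag_exact => [//|i|i]; rewrite mxE; case: ifP => _ //.
  by apply: theta_factor_second_eigenvalue; rewrite /phi /phi6 mulfVK.
by rewrite /psi6 -/phi; ring.
Qed.
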